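(* Let $G$ be a finite undirected graph, $\tau\ge1$ an integer, and $e=(u,v)\in E(G)$. Then for every $w\in\Delta_{\lfloor\tau/2\rfloor}(e,G)$ we have $\phi_\tau(e,G)\ge|V(\Omega(w))|$; i.e. $\phi_\tau(e,G)\ge\max\{|V(\Omega(w))| : w\in\Delta_{\lfloor\tau/2\rfloor}(e,G)\}$.
   Context: Graphs are finite, simple, undirected and unweighted; paths may repeat vertices and their length is the number of edges. For vertices $v,u$ of a graph $H$, $u$ is $t$-hop reachable from $v$ in $H$ (written $u\rightarrow_t v$) if there is a path between them in $H$ of length at most $t$. $N_t(v,H)$ is the set of vertices $u\ne v$ that are $t$-hop reachable from $v$ in $H$. For an edge $e=(u,v)$ of $H$, $\Delta_t(e,H)=N_t(u,H)\cap N_t(v,H)$ and $\mathrm{sup}_t(e,H)=|\Delta_t(e,H)|$. The $(k,\tau)$-truss of $G$ is the maximal subgraph $G'$ of $G$ such that $\mathrm{sup}_\tau(e,G')\ge k-2$ for every $e\in E(G')$ (supports computed inside $G'$) and no more edges of $G$ can be added while keeping this property. The higher-order truss number $\phi_\tau(e,G)$ is the maximum $k$ such that $e$ belongs to the $(k,\tau)$-truss of $G$. For a vertex $w$, $\Omega(w)$ is the subgraph of $G$ induced by $\{w\}\cup\{x : x\rightarrow_{\lfloor\tau/2\rfloor} w \text{ in } G\}$. *)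

From mathcomp Require Import all_boot.
Set Implicit Arguments. Unset Strict Implicit. Unset Printing Implicit Defensive.

(* A finite simple undirected graph G is given by a vertex type T : finType
   and an adjacency relation g : rel T (assumed symmetric and irreflexive).
   A subgraph H of G is represented by its (ordered, symmetric) edge set
   F : {set T * T}; paths only use edges of F. *)

Section HOT.
Variable T : finType.

Definition Eg (g : rel T) : {set T * T} := [set p | g p.1 p.2].

Fixpoint reach (F : {set T * T}) (t : nat) (x y : T) : bool :=
  match t with
  | 0 => x == y
  | t'.+1 => reach F t' x y || [exists z, reach F t' x z && ((z, y) \in F)]
  end.

Definition Nt (F : {set T * T}) (t : nat) (v : T) : {set T} :=
  [set x | (x != v) && reach F t v x].

Definition Delta (F : {set T * T}) (t : nat) (e : T * T) : {set T} :=
  Nt F t e.1 :&: Nt F t e.2.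

Definition sup (F : {set T * T}) (t : nat) (e : T * T) : nat := #|Delta F t e|.

Definition truss_valid (g : rel T) (k tau : nat) (F : {set T * T}) : bool :=
  [&& F \subset Eg g,
      [forall p in F, (p.2, p.1) \in F] &
      [forall p in F, k - 2 <= sup F tau p]].

(* the (k,tau)-truss: the maximal such subgraph, i.e. the union of all of them *)
Definition truss (g : rel T) (k tau : nat) : {set T * T} :=
  \bigcup_(F : {set T * T} | truss_valid g k tau F) F.

(* Supports are at most #|T| - 2, so k never exceeds #|T|
   (for a genuine edge); the range bound #|T|.+3 is therefore harmless. *)
Definition phi (g : rel T) (tau : nat) (e : T * T) : nat :=
  \max_(k < #|T|.+3 | e \in truss g k tau) k.

Definition OmegaV (g : rel T) (tau : nat) (w : T) : {set T} :=
  [set x | reach (Eg g) tau./2 w x].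

End HOT.

(* Let S be the ball of radius h = tau/2 around w in G, and H the subgraph of
   G induced by S.  Every vertex on a path of length at most h from w lies in
   S, so every vertex of S is within h hops of w in H, and any two vertices of S
   are within 2h <= tau hops of each other in H.  Hence every edge (a, b) of H
   has tau-support at least #|S :\ a :\ b| >= #|S| - 2, i.e. H lies in the
   (#|S|, tau)-truss; and u, v lie in S because w is within h hops of both. *)

From mathcomp Require Import all_boot.
From mathcomp Require Import zify.
Set Implicit Arguments. Unset Strict Implicit.

Section Reach.
Variable T : finType.
Implicit Types (F : {set T * T}) (A : {set T}).

Definition sym_edges F := forall a b, (a, b) \in F -> (b, a) \in F.

Lemma reach_le F s t x y : s <= t -> reach F s x y -> reach F t x y.
Proof.
move=> + Rxy; elim: t => [|t IHt]; first by rewrite leqn0 => /eqP <-.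
by rewrite leq_eqVlt => /predU1P [<- // | /IHt /= ->].
Qed.

Lemma reach_edge F x y : (x, y) \in F -> reach F 1 x y.
Proof. by move=> Fxy; apply/orP; right; apply/existsP; exists x; rewrite eqxx. Qed.

Lemma reach_cat F s t x y z :
  reach F s x y -> reach F t y z -> reach F (s + t) x z.
Proof.
move=> Rxy; elim: t z => [|t IHt] z /=; first by rewrite addn0 => /eqP <-.
rewrite addnS /= => /orP [/IHt -> //| /existsP [z' /andP [/IHt Rxz' Fz'z]]].
by apply/orP; right; apply/existsP; exists z'; rewrite Rxz'.
Qed.

Lemma reach_sym F t x y : sym_edges F -> reach F t x y -> reach F t y x.
Proof.
move=> Fsym; elim: t x y => [|t IHt] x y; first by rewrite /= eq_sym.
case/orP => [/IHt/(reach_le (leqnSn t)) //|].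
case/existsP => z /andP [/IHt Rzx /Fsym Fyz].
by rewrite -add1n (reach_cat (reach_edge Fyz) Rzx).
Qed.

Lemma leq_sup_reach A F t a b :
  {in A &, forall x y, reach F t x y} -> a \in A -> b \in A ->
  #|A| - 2 <= sup F t (a, b).
Proof.
move=> reachA Aa Ab.
have sub : A :\ a :\ b \subset Delta F t (a, b).
  apply/subsetP => x; rewrite !inE => /and3P [xb xa Ax] /=.
  by rewrite xa xb !reachA.
apply: leq_trans (subset_leq_card sub).
have := cardsD1 a A; have := cardsD1 b (A :\ a); lia.
Qed.

End Reach.

Section Ball.
Variables (T : finType) (g : rel T).
Hypothesis gsym : symmetric g.
Implicit Types (A : {set T}) (h : nat) (w : T).

Definition ball h w := [set x | reach (Eg g) h w x].

Definition induced_edges A := [set p | [&& g p.1 p.2, p.1 \in A & p.2 \in A]].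

Lemma Eg_sym : sym_edges (Eg g).
Proof. by move=> a b; rewrite !inE /= gsym. Qed.

Lemma induced_edges_sym A : sym_edges (induced_edges A).
Proof. by move=> a b; rewrite !inE /= gsym => /and3P [-> -> ->]. Qed.

Lemma induced_edges_sub A : induced_edges A \subset Eg g.
Proof. by apply/subsetP => p; rewrite !inE => /and3P []. Qed.

Lemma reach_induced_ball h w t x :
  t <= h -> reach (Eg g) t w x -> reach (induced_edges (ball h w)) t w x.
Proof.
elim: t x => [|t IHt] x //= lt_t_h; have le_t_h := ltnW lt_t_h.
case/orP => [/(IHt _ le_t_h) -> // | /existsP [z /andP [Rwz Egzx]]].
have z_in : z \in ball h w by rewrite inE (reach_le le_t_h).
have x_in : x \in ball h w.
  rewrite inE (reach_le lt_t_h) //=.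
  by apply/orP; right; apply/existsP; exists z; rewrite Rwz.
apply/orP; right; apply/existsP; exists z; rewrite inE in Egzx.
by rewrite IHt // [_ \in induced_edges _]inE /= Egzx z_in x_in.
Qed.

Lemma ball_reach_induced h w x y : x \in ball h w -> y \in ball h w ->
  reach (induced_edges (ball h w)) (h + h) x y.
Proof.
rewrite !inE => /(reach_induced_ball (leqnn h)) Rwx /(reach_induced_ball (leqnn h)) Rwy.
exact: reach_cat (reach_sym (@induced_edges_sym _) Rwx) Rwy.
Qed.

Lemma induced_ball_truss_valid tau w :
  truss_valid g #|ball tau./2 w| tau (induced_edges (ball tau./2 w)).
Proof.
apply/and3P; split; first exact: induced_edges_sub.
  by apply/forall_inP => -[a b] /induced_edges_sym.
apply/forall_inP => -[a b]; rewrite inE /= => /and3P [_ Ba Bb].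
apply: leq_sup_reach Ba Bb => x y Bx By.
apply: reach_le (ball_reach_induced Bx By).
by rewrite addnn -[leqRHS]odd_double_half leq_addl.
Qed.

Lemma truss_le_phi k tau F e : truss_valid g k tau F -> e \in F ->
  k <= #|T|.+2 -> k <= phi g tau e.
Proof.
move=> validF Fe le_k; rewrite -ltnS in le_k.
have e_truss : e \in truss g (Ordinal le_k) tau by apply/bigcupP; exists F.
exact: (@leq_bigmax_cond _ (fun k : 'I__ => e \in truss g k tau) val _ e_truss).
Qed.

End Ball.

Theorem lemma5 (T : finType) (g : rel T) (gsym : symmetric g)
  (girr : irreflexive g) (tau : nat) (htau : 1 <= tau) (u v : T)
  (huv : g u v) (w : T) (hw : w \in Delta (Eg g) tau./2 (u, v)) :
  #|OmegaV g tau w| <= phi g tau (u, v).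
Proof.
change (#|ball g tau./2 w| <= phi g tau (u, v)).
have ball_uv : u \in ball g tau./2 w /\ v \in ball g tau./2 w.
  move: hw; rewrite !inE /= => /andP [/andP [_ Ruw] /andP [_ Rvw]].
  by split; apply: reach_sym (Eg_sym gsym) _.
have uv_induced : (u, v) \in induced_edges g (ball g tau./2 w).
  by rewrite inE /= huv; case: ball_uv => -> ->.
apply: truss_le_phi (induced_ball_truss_valid gsym tau w) uv_induced _.
by apply: leq_trans (max_card _) _; rewrite !leqW.
Qed.
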